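(* Let $G$ be a finite group acting on a closed connected manifold $M$, let $\ell$ be a prime, and suppose the action of $G$ on $M$ is $\mathbb{F}_\ell$-homologically wide. Then for every subgroup $H_1\le G$, the $\mathbb{F}_\ell[G]$-module $(\mathrm{Ind}^G_{H_1}\mathbf{1})\otimes_{\mathbb{Z}}\mathbb{F}_\ell$ is an $\mathbb{F}_\ell[G]$-submodule of $\mathrm{H}_1(M,\mathbb{F}_\ell)$; and if $\ell$ does not divide $|G|$, it is also a quotient $\mathbb{F}_\ell[G]$-module of $\mathrm{H}_1(M,\mathbb{F}_\ell)$.
   Context: The action of $G$ on $M$ is $\mathbb{F}_\ell$-homologically wide if the representation of $G$ on $\mathrm{H}_1(M,\mathbb{F}_\ell)$ induced by the action contains the regular representation $\mathbb{F}_\ell[G]$, i.e. there is $\omega\in\mathrm{H}_1(M,\mathbb{F}_\ell)$ with the $|G|$ classes $g\omega$ ($g\in G$) linearly independent. $\mathrm{Ind}^G_{H_1}\mathbf{1}$ is the permutation module $\mathbb{Z}[G/H_1]$. *)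

From HB Require Import structures.
From mathcomp Require Import all_boot all_order all_algebra all_fingroup all_solvable all_field all_character.
Set Implicit Arguments. Unset Strict Implicit. Unset Printing Implicit Defensive.
Import GRing.Theory.
Local Open Scope ring_scope.

(* Representations act on ROW vectors on the right: v |-> v *m rG g
   (mathcomp convention, rG (x * y) = rG x *m rG y). *)

Section Defs.
Variables (F : fieldType) (gT : finGroupType) (G : {group gT}).

(* The F[G]-module H_1(M,F) is modelled by an arbitrary finite-dimensional
   representation rG of G over F.  "Homologically wide": there is w such that
   the |G| vectors w.g (g in G) are linearly independent. *)
Definition homologically_wide n (rG : mx_representation F G n) : Prop :=
  exists w : 'rV[F]_n,
    row_free (\matrix_(i < #|G|) (w *m rG (enum_val (A := G) i))).

(* The permutation module F[H\G] = (Ind_H^G 1) (x)_Z F, with basis the right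
   cosets H x (x in G); g in G acts on basis row vectors by H x |-> H x g. *)
Definition coset_of_idx (H : {group gT}) (i : 'I_#|rcosets H G|) : {set gT} :=
  enum_val (A := rcosets H G) i.
Arguments coset_of_idx H i : clear implicits.

Definition perm_module_mx (H : {group gT}) (g : gT) :
    'M[F]_(#|rcosets H G|) :=
  \matrix_(i < #|rcosets H G|, j < #|rcosets H G|) (((coset_of_idx H i :* g)%g == coset_of_idx H j)%:R).

Definition perm_is_submodule n (rG : mx_representation F G n) (H : {group gT})
    : Prop :=
  exists U : 'M[F]_(#|rcosets H G|, n),
    row_free U /\ forall g, g \in G -> perm_module_mx H g *m U = U *m rG g.

Definition perm_is_quotient n (rG : mx_representation F G n) (H : {group gT})
    : Prop :=
  exists Q : 'M[F]_(n, #|rcosets H G|),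
    row_full Q /\ forall g, g \in G -> rG g *m Q = Q *m perm_module_mx H g.

End Defs.

From HB Require Import structures.
From mathcomp Require Import all_boot all_order all_algebra all_fingroup all_solvable all_field all_character.
Set Implicit Arguments. Unset Strict Implicit. Unset Printing Implicit Defensive.
Import GRing.Theory.
Local Open Scope ring_scope.

(* Let w be a wide vector, so that g |-> w.g embeds F[G] into the module.
   Summing w.y over the right coset H x sends the basis vector H x of F[H\G]
   to an element of the module; this map is G-equivariant, and it is
   injective because it factors as the coset indicator embedding
   F[H\G] -> F[G] followed by the embedding F[G] -> module.  When |G| is
   invertible in F, averaging a left inverse of this embedding over G turns
   it into an equivariant surjection, as in Maschke's theorem. *)

Section IntertwinerSplitting.
Variables (F : fieldType) (gT : finGroupType) (G : {group gT}) (a b : nat).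
Variables (rA : mx_representation F G a) (rB : mx_representation F G b).

Lemma row_free_intertwiner_split (U : 'M[F]_(a, b)) :
    (#|G|%:R : F) != 0 -> row_free U ->
    (forall g, g \in G -> rA g *m U = U *m rB g) ->
  exists2 Q : 'M[F]_(b, a),
    row_full Q & forall g, g \in G -> rB g *m Q = Q *m rA g.
Proof.
move=> nzG /row_freeP[V UV] rAU.
pose Q0 := \sum_(g in G) rB g^-1%g *m V *m rA g.
exists (#|G|%:R^-1 *: Q0) => [|h hG].
  apply/row_fullP; exists U; rewrite -scalemxAr mulmx_sumr.
  have UQ0 g : g \in G -> U *m (rB g^-1%g *m V *m rA g) = 1%:M.
    move=> gG; rewrite !mulmxA -rAU ?groupV // -(mulmxA (rA _)) UV mulmx1.
    by rewrite -repr_mxM ?groupV // mulVg repr_mx1.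
  by rewrite (eq_bigr _ UQ0) sumr_const -scaler_nat scalerA mulVf ?scale1r.
rewrite -scalemxAr -scalemxAl; congr (_ *: _).
rewrite mulmx_sumr mulmx_suml (reindex_inj (mulIg h)) /=.
apply: eq_big => [g|g]; first by rewrite groupMr.
rewrite groupMr // => gG; rewrite !mulmxA -repr_mxM ?groupV ?groupM // invMg mulKVg.
by rewrite repr_mxM ?groupV // !mulmxA.
Qed.

End IntertwinerSplitting.

Section PermutationModule.
Variables (F : fieldType) (gT : finGroupType) (G H : {group gT}).
Hypothesis sHG : H \subset G.

Local Notation N := #|rcosets H G|.
Local Notation C := (@coset_of_idx gT G H).
Local Notation P := (perm_module_mx F G H).

Lemma coset_of_idxP i : C i \in rcosets H G.
Proof. exact: enum_valP. Qed.

Lemma coset_of_idx_sub i : C i \subset G.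
Proof.
have /rcosetsP[x xG ->] := coset_of_idxP i.
by apply/subsetP => y /rcosetP[h hH ->]; rewrite groupM // (subsetP sHG).
Qed.

Lemma rcoset_of_idxP i g : g \in G -> (C i :* g)%g \in rcosets H G.
Proof.
move=> gG; have /rcosetsP[x xG ->] := coset_of_idxP i.
by apply/rcosetsP; exists (x * g)%g; rewrite ?groupM // rcosetM.
Qed.

Definition coset_idx_mul i g : 'I_N :=
  enum_rank_in (coset_of_idxP i) (C i :* g)%g.

Lemma coset_of_idx_mul i g : g \in G -> C (coset_idx_mul i g) = (C i :* g)%g.
Proof. by move=> gG; rewrite /coset_of_idx enum_rankK_in ?rcoset_of_idxP. Qed.

Lemma coset_of_idx_inj : injective C.
Proof. exact: enum_val_inj. Qed.

Lemma row_perm_module_mx m (M : 'M[F]_(N, m)) g i :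
  g \in G -> row i (P g *m M) = row (coset_idx_mul i g) M.
Proof.
move=> gG; rewrite row_mul mulmx_sum_row (bigD1 (coset_idx_mul i g)) //=.
rewrite !mxE coset_of_idx_mul // eqxx scale1r big1 ?addr0 // => j nj.
rewrite !mxE -coset_of_idx_mul //; case: eqP => [/coset_of_idx_inj Ej|].
  by rewrite Ej eqxx in nj.
by rewrite scale0r.
Qed.

Lemma perm_module_mx1 : P 1%g = 1%:M.
Proof.
apply/matrixP => i j; rewrite !mxE mulg1.
by rewrite (inj_eq coset_of_idx_inj).
Qed.

Lemma perm_module_mxM g h :
  g \in G -> h \in G -> P (g * h)%g = P g *m P h.
Proof.
move=> gG hG; apply/row_matrixP => i.
rewrite -[P (g * h)%g]mulmx1 -[P h]mulmx1 mulmxA -mulmxA.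
rewrite !row_perm_module_mx ?groupM //; congr row; apply: coset_of_idx_inj.
by rewrite !coset_of_idx_mul ?groupM // rcosetM.
Qed.

Definition perm_module_repr : mx_representation F G N :=
  MxRepresentation (conj perm_module_mx1 perm_module_mxM).

Lemma repr_coset_of_idx_in i k : (repr (C k) \in C i) = (i == k).
Proof.
have /rcosetsP[x xG Cix] := coset_of_idxP i.
have /rcosetsP[y yG Cky] := coset_of_idxP k.
have ryC : repr (C k) \in C k by rewrite Cky; exact: mem_repr (rcoset_refl H y).
apply/idP/eqP => [|-> //]; rewrite Cix => /rcoset_eqP Exy.
by apply: coset_of_idx_inj; rewrite Cix -Exy; move: ryC; rewrite Cky => /rcoset_eqP.
Qed.

Definition coset_indicator_mx : 'M[F]_(N, #|G|) :=
  \matrix_(i, j) (enum_val (A := G) j \in C i)%:R.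

Lemma coset_indicator_mx_free : row_free coset_indicator_mx.
Proof.
apply/row_freeP; exists (\matrix_(j, k) (enum_val (A := G) j == repr (C k))%:R).
apply/matrixP => i k; rewrite !mxE.
have rG : repr (C k) \in G.
  by rewrite (subsetP (coset_of_idx_sub k)) // repr_coset_of_idx_in.
pose j0 := enum_rank_in rG (repr (C k)).
have ej0 : enum_val j0 = repr (C k) by rewrite enum_rankK_in.
rewrite (bigD1 j0) //= big1 ?addr0 => [|j nj]; rewrite !mxE.
  by rewrite ej0 eqxx mulr1 repr_coset_of_idx_in.
by rewrite -ej0 (inj_eq enum_val_inj) (negPf nj) mulr0.
Qed.

Section CosetSums.
Variables (n : nat) (rG : mx_representation F G n) (w : 'rV[F]_n).

Definition orbit_mx : 'M[F]_(#|G|, n) :=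
  \matrix_(i < #|G|) (w *m rG (enum_val (A := G) i)).

Definition coset_sum (A : {set gT}) : 'rV[F]_n := \sum_(y in A) w *m rG y.

Definition coset_sum_mx : 'M[F]_(N, n) := \matrix_(i < N) coset_sum (C i).

Lemma coset_sum_rcoset (A : {set gT}) g :
  A \subset G -> g \in G -> coset_sum (A :* g)%g = coset_sum A *m rG g.
Proof.
move=> sAG gG; rewrite /coset_sum mulmx_suml (reindex_inj (mulIg g)) /=.
apply: eq_big => [x|x]; first by rewrite mem_rcoset mulgK.
rewrite mem_rcoset mulgK => xA.
by rewrite repr_mxM ?mulmxA // (subsetP sAG).
Qed.

Lemma coset_sum_mx_intertwines g :
  g \in G -> P g *m coset_sum_mx = coset_sum_mx *m rG g.
Proof.
move=> gG; apply/row_matrixP => i.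
rewrite row_perm_module_mx // row_mul !rowK coset_of_idx_mul //.
by rewrite coset_sum_rcoset ?coset_of_idx_sub.
Qed.

Lemma coset_sum_mx_factor : coset_sum_mx = coset_indicator_mx *m orbit_mx.
Proof.
apply/row_matrixP => i; rewrite row_mul mulmx_sum_row rowK /coset_sum.
rewrite (eq_bigl (fun y => (y \in G) && (y \in C i))) => [|y].
  rewrite big_enum_val_cond big_mkcond /=; apply: eq_bigr => j _.
  by rewrite !mxE rowK; case: (_ \in _); rewrite ?scale1r ?scale0r.
by case yC: (y \in C i); rewrite ?andbF ?andbT // (subsetP (coset_of_idx_sub i)).
Qed.

End CosetSums.

Lemma wide_perm_is_submodule n (rG : mx_representation F G n) :
  homologically_wide rG -> perm_is_submodule rG H.
Proof.
move=> [w /row_freeP[V WV]]; exists (coset_sum_mx rG w); split; last first.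
  exact: coset_sum_mx_intertwines.
have /row_freeP[T ST] := coset_indicator_mx_free.
apply/row_freeP; exists (V *m T).
by rewrite coset_sum_mx_factor mulmxA -(mulmxA coset_indicator_mx) WV mulmx1.
Qed.

Lemma perm_submodule_is_quotient n (rG : mx_representation F G n) :
  (#|G|%:R : F) != 0 -> perm_is_submodule rG H -> perm_is_quotient rG H.
Proof.
move=> nzG [U [Ufree rU]].
have [Q Qfull rQ] := row_free_intertwiner_split (rA := perm_module_repr) (rB := rG) nzG Ufree rU.
by exists Q.
Qed.

End PermutationModule.

Theorem lemma7p2 (gT : finGroupType) (G : {group gT}) (ell n : nat)
    (rG : mx_representation 'F_ell G n) :
  prime ell ->
  homologically_wide rG ->
  forall H1 : {group gT}, H1 \subset G ->
    perm_is_submodule rG H1 /\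
    (~~ (ell %| #|G|)%N -> perm_is_quotient rG H1).
Proof.
move=> ell_pr wide H1 sH1G.
have sub := wide_perm_is_submodule sH1G wide.
split=> // ell_ndvd; apply: perm_submodule_is_quotient sub.
by rewrite -(dvdn_pcharf (pchar_Fp ell_pr)).
Qed.
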